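(* Let $G$ be a topological group and $A$ a topological $G$-module. Then the inclusion $j_h^*\colon C_{lc}^*(G,A)\hookrightarrow \mathrm{Tot}\,A_{lc}^{*,*}(G,A)^G$ induces an isomorphism in cohomology.
   Context: A topological $G$-module is an abelian topological group $A$ with an action of $G$ by group automorphisms such that the action map $G\times A\to A$ is continuous. For an identity neighbourhood $U$ of $G$ put $\Gamma_U^0:=G$ and, for $p\ge 1$, $\Gamma_U^p:=\{(g_0,\dots,g_p)\in G^{p+1}\mid g_i^{-1}g_j\in U \text{ for all } 0\le i,j\le p\}$. The group $G$ acts on maps $f\colon G^{n+1}\to A$ by $(g.f)(g_0,\dots,g_n)=g.\big(f(g^{-1}g_0,\dots,g^{-1}g_n)\big)$; the fixed points are the equivariant (homogeneous) cochains, with the differential $df(g_0,\dots,g_{n+1})=\sum_{i=0}^{n+1}(-1)^i f(g_0,\dots,\widehat{g_i},\dots,g_{n+1})$. $C_{lc}^n(G,A)$ denotes the group of $G$-equivariant maps $f\colon G^{n+1}\to A$ whose restriction to $\Gamma_U^n$ is continuous for some identity neighbourhood $U$. For $p,q\ge 0$, $A_{lc}^{p,q}(G,A)$ is the group of maps $f\colon G^{p+1}\times G^{q+1}\to A$ such that for some identity neighbourhood $U$ the restriction of $f$ to $G^{p+1}\times\Gamma_U^q$ is continuous, with differentials $d_h f(x_0,\dots,x_{p+1},\vec y)=\sum_{i=0}^{p+1}(-1)^i f(x_0,\dots,\widehat{x_i},\dots,x_{p+1},\vec y)$ and $d_v f(\vec x,y_0,\dots,y_{q+1})=(-1)^p\sum_{i=0}^{q+1}(-1)^i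 f(\vec x,y_0,\dots,\widehat{y_i},\dots,y_{q+1})$. $G$ acts on these by $(g.f)(\vec x,\vec y)=g.f(g^{-1}\vec x,g^{-1}\vec y)$ (diagonal action on all arguments), and $A_{lc}^{p,q}(G,A)^G$ denotes the fixed points, a sub double complex. $\mathrm{Tot}\,A_{lc}^{*,*}(G,A)^G$ is its total complex, $\mathrm{Tot}^n=\bigoplus_{p+q=n}A_{lc}^{p,q}(G,A)^G$ with differential $d_h+d_v$. The map $j_h^q\colon C_{lc}^q(G,A)\to A_{lc}^{0,q}(G,A)^G\subset \mathrm{Tot}^q$ is the row augmentation $j_h(f)(x_0,\vec y)=f(\vec y)$. *)

From HB Require Import structures.
From mathcomp Require Import all_boot all_order all_algebra.
From mathcomp Require Import all_classical all_reals.
From mathcomp Require Import topology tvs.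
Set Implicit Arguments. Unset Strict Implicit. Unset Printing Implicit Defensive.
Import Order.TTheory GRing.Theory Num.Theory.
Local Open Scope classical_set_scope.
Local Open Scope ring_scope.

Definition is_topological_group (T : topologicalType)
    (mul : T -> T -> T) (inv : T -> T) (e : T) : Prop :=
  [/\ (forall x y z, mul x (mul y z) = mul (mul x y) z),
      (forall x, mul e x = x /\ mul x e = x),
      (forall x, mul (inv x) x = e /\ mul x (inv x) = e),
      continuous (fun p : T * T => mul p.1 p.2) &
      continuous inv].

Definition is_topological_G_module (T : topologicalType)
    (mul : T -> T -> T) (e : T) (A : topologicalZmodType) (act : T -> A -> A) : Prop :=
  [/\ (forall g a b, act g (a + b) = act g a + act g b),
      (forall a, act e a = a),
      (forall g h a, act (mul g h) a = act g (act h a)) &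
      continuous (fun p : T * A => act p.1 p.2)].

Section Cochains.
Variables (T : topologicalType) (mul : T -> T -> T) (inv : T -> T) (e : T).
Variables (A : topologicalZmodType) (act : T -> A -> A).

Definition Tup (p : nat) := {ptws 'I_p.+1 -> T}.

Definition Gamma (U : set T) (p : nat) : set (Tup p) :=
  if p is 0 then setT
  else [set x | forall i j : 'I_p.+1, U (mul (inv (x i)) (x j))].
Arguments Gamma U p : clear implicits.

Definition CC (n : nat) := Tup n -> A.

Definition equivariant n (f : CC n) : Prop :=
  forall (g : T) (x : Tup n), act g (f (fun i => mul (inv g) (x i))) = f x.

Definition C_lc n (f : CC n) : Prop :=
  equivariant f /\
  exists U : set T, nbhs e U /\ {within Gamma U n, continuous f}.

Definition dC n (f : CC n) : CC n.+1 :=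
  fun x => \sum_(i < n.+2) (f (fun j => x (lift i j))) *~ ((-1) ^+ i).

(* the double complex: an element of the total complex is a family of
   maps F p q : G^{p+1} x G^{q+1} -> A, indexed by all p q *)
Definition TT := forall p q : nat, ('I_p.+1 -> T) -> ('I_q.+1 -> T) -> A.

Definition A_lc p q (f : ('I_p.+1 -> T) -> ('I_q.+1 -> T) -> A) : Prop :=
  exists U : set T, nbhs e U /\
    {within [set xy : Tup p * Tup q | Gamma U q xy.2],
       continuous (fun xy => f xy.1 xy.2)}.

Definition invariant p q (f : ('I_p.+1 -> T) -> ('I_q.+1 -> T) -> A) : Prop :=
  forall g x y, act g (f (fun i => mul (inv g) (x i)) (fun i => mul (inv g) (y i)))
                = f x y.

(* membership in Tot^n = (+)_{p+q=n} A_lc^{p,q}(G,A)^G *)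
Definition Tot (n : nat) (F : TT) : Prop :=
  forall p q, (p + q = n -> A_lc (F p q) /\ invariant (F p q)) /\
              (p + q <> n -> forall x y, F p q x y = 0).


Definition d_h p q (f : ('I_p.+1 -> T) -> ('I_q.+1 -> T) -> A) :
    ('I_p.+2 -> T) -> ('I_q.+1 -> T) -> A :=
  fun x y => \sum_(i < p.+2) (f (fun j => x (lift i j)) y) *~ ((-1) ^+ i).

Definition d_v p q (f : ('I_p.+1 -> T) -> ('I_q.+1 -> T) -> A) :
    ('I_p.+1 -> T) -> ('I_q.+2 -> T) -> A :=
  fun x y => (\sum_(i < q.+2) (f x (fun j => y (lift i j))) *~ ((-1) ^+ i)) *~ ((-1) ^+ p).

Definition dT (F : TT) : TT :=
  fun p q x y =>
    (match p as p0 return ('I_p0.+1 -> T) -> A with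
     | 0 => fun _ => 0
     | p'.+1 => fun x' => d_h (F p' q) x' y
     end x) +
    (match q as q0 return ('I_q0.+1 -> T) -> A with
     | 0 => fun _ => 0
     | q'.+1 => fun y' => d_v (F p q') x y'
     end y).

Definition Tsub (F F' : TT) : TT := fun p q x y => F p q x y - F' p q x y.

(* the row augmentation j_h : C^n -> A^{0,n} inside Tot^n,
   j_h(f)(x_0, y) = f(y) *)
Definition j_h n (f : CC n) : TT :=
  fun p q x y => if (p == 0%N) && (q == n) then f (fun i : 'I_n.+1 => y (inord i)) else 0.

Definition C_cobound (n : nat) : CC n -> Prop :=
  match n with
  | 0 => fun c => forall x, c x = 0
  | n'.+1 => fun c => exists b : CC n', C_lc b /\ dC b = c
  end.

Definition T_cobound (n : nat) (F : TT) : Prop :=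
  match n with
  | 0 => forall p q x y, F p q x y = 0
  | n'.+1 => exists W : TT, Tot n' W /\ dT W = F
  end.

(* j_h is a cochain map C_lc^* -> Tot, and the induced map on cohomology
   H^n(C_lc) -> H^n(Tot) is injective and surjective for every n *)
Definition jh_quasi_iso : Prop :=
  (forall n (c : CC n), C_lc c -> Tot n (j_h c)) /\
  (forall n (c : CC n), C_lc c -> dT (j_h c) = j_h (dC c)) /\
  (forall n (c : CC n), C_lc c -> dC c = (fun _ => 0) ->
      T_cobound n (j_h c) -> C_cobound c) /\
  (forall n (z : TT), Tot n z -> dT z = (fun p q _ _ => 0) ->
      exists c : CC n, [/\ C_lc c, dC c = (fun _ => 0) &
                           T_cobound n (Tsub (j_h c) z)]).

End Cochains.

(* The rows of the double complex are exact: inserting [y_0] as a new first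
   horizontal argument ([row_contract]) is a contracting homotopy for [d_h],
   and in column 0 a horizontal cocycle does not depend on its horizontal
   argument, i.e. it lies in the image of [j_h].  A staircase argument then
   moves any total cochain whose coboundary lives in column 0, up to a total
   coboundary, into column 0, where it is [j_h] of a locally continuous
   cochain.  Applied to a cocycle this gives surjectivity, applied to a
   cochain bounding [j_h c] it gives injectivity.  Local continuity and
   invariance survive all these operations, since each of them only
   reindexes the arguments. *)

From Pilot Require Import Defs.
From HB Require Import structures.
From mathcomp Require Import all_boot all_order all_algebra.
From mathcomp Require Import all_classical all_reals.
From mathcomp Require Import topology tvs.
From mathcomp Require Import zify ring.
Set Implicit Arguments. Unset Strict Implicit. Unset Printing Implicit Defensive.
Import Order.TTheory GRing.Theory Num.Theory.
Local Open Scope classical_set_scope.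
Local Open Scope ring_scope.

Local Notation sg i := ((-1 : int) ^+ i).

Section AlternatingFaceSum.
Variables (B : zmodType) (S : Type).

Definition delta p (F : ('I_p.+1 -> S) -> B) : ('I_p.+2 -> S) -> B :=
  fun x => \sum_(i < p.+2) F (fun j => x (lift i j)) *~ sg i.

Lemma bump_bump (i j k : nat) : (j < i)%N -> bump i (bump j k) = bump j (bump i.-1 k).
Proof. rewrite /bump; lia. Qed.

(* The pairs [(i, j)] of face indices with [j < i] and with [i <= j] are matched
   by the simplicial identity [lift i \o lift j = lift j \o lift i.-1]. *)
Definition face_swap p (ij : 'I_p.+3 * 'I_p.+2) : 'I_p.+3 * 'I_p.+2 :=
  if (ij.2 < ij.1)%N then (inord ij.2, inord ij.1.-1) else (inord ij.2.+1, inord ij.1).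

Lemma face_swapK p : involutive (@face_swap p).
Proof.
move=> [i j]; rewrite /face_swap /=.
have hi := ltn_ord i; have hj := ltn_ord j.
case: (ltnP j i) => ji /=; rewrite !inordK; try lia.
- rewrite ifN; last lia.
  by congr pair; apply: ord_inj; rewrite inordK /=; lia.
- rewrite ifT; last lia.
  by congr pair; apply: ord_inj; rewrite inordK /=; lia.
Qed.

Lemma face_swap_lt p (ij : 'I_p.+3 * 'I_p.+2) :
  ((face_swap ij).2 < (face_swap ij).1)%N = ~~ (ij.2 < ij.1)%N.
Proof.
case: ij => i j; rewrite /face_swap /=.
have hi := ltn_ord i; have hj := ltn_ord j.
by case: (ltnP j i) => ji /=; rewrite !inordK; lia.
Qed.

Lemma delta_delta p (F : ('I_p.+1 -> S) -> B) x : delta (@delta p F) x = 0.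
Proof.
rewrite /delta.
under eq_bigr => i _ do rewrite mulrz_suml.
under eq_bigr => i _ do under eq_bigr => j _ do rewrite -mulrzA.
rewrite pair_bigA /= (bigID (fun ij : 'I_p.+3 * 'I_p.+2 => (ij.2 < ij.1)%N)) /=.
rewrite (reindex_inj (inv_inj (@face_swapK p))) /=.
under [X in X + _ = _]eq_bigl => ij do rewrite face_swap_lt.
rewrite -big_split /=; apply: big1 => -[i j] /= ji.
have hi := ltn_ord i; have hj := ltn_ord j.
rewrite /face_swap /= ifN; last lia.
rewrite !inordK; try lia.
have -> : (fun k => x (lift (inord j.+1) (lift (inord i) k))) =
          (fun k => x (lift i (lift j k))).
  apply: funext => k; congr x; apply: ord_inj; rewrite /= !inordK; try lia.
  by rewrite bump_bump //; lia.
by rewrite exprS mulN1r mulrN mulrNz [(sg i * _)]mulrC addNr.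
Qed.

Lemma deltaD p (F G : ('I_p.+1 -> S) -> B) x :
  delta (fun x => F x + G x) x = delta F x + delta G x.
Proof. by rewrite /delta -big_split; apply: eq_bigr => i _; rewrite mulrzDl. Qed.

Lemma deltaN p (F : ('I_p.+1 -> S) -> B) x : delta (fun x => - F x) x = - delta F x.
Proof. by rewrite /delta -sumrN; apply: eq_bigr => i _; rewrite mulNrz. Qed.

Lemma deltaMz p (F : ('I_p.+1 -> S) -> B) z x :
  delta (fun x => F x *~ z) x = delta F x *~ z.
Proof. by rewrite /delta mulrz_suml; apply: eq_bigr => i _; rewrite -!mulrzA mulrC. Qed.

Lemma delta_eq0 p (F : ('I_p.+1 -> S) -> B) x : (forall x, F x = 0) -> delta F x = 0.
Proof. by move=> F0; rewrite /delta big1 // => i _; rewrite F0 mul0rz. Qed.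

End AlternatingFaceSum.

Section ContinuityIntoZmodule.
Variables (X : topologicalType) (A : topologicalZmodType).
Implicit Types f g : X -> A.

Lemma continuousD f g : continuous f -> continuous g -> continuous (fun x => f x + g x).
Proof.
move=> cf cg x; apply: (@continuous2_cvg _ A A A _ _ f g (fun a b => a + b)).
- exact: (@add_continuous A (f x, g x)).
- exact: cf.
- exact: cg.
Qed.

Lemma continuousN f : continuous f -> continuous (fun x => - f x).
Proof. by move=> cf x; apply: continuous_cvg; [exact: opp_continuous | exact: cf]. Qed.

Lemma continuous_sum (I : Type) (r : seq I) (F : I -> X -> A) :
  (forall i, continuous (F i)) -> continuous (fun x => \sum_(i <- r) F i x).
Proof. by move=> cF; apply: continuous_big => //; exact: add_continuous. Qed.

Lemma continuousMz f z : continuous f -> continuous (fun x => f x *~ z).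
Proof.
have cMn n : continuous f -> continuous (fun x => f x *+ n).
  move=> cf; elim: n => [|n IH].
    by under eq_fun do rewrite mulr0n; exact: cst_continuous.
  by under eq_fun do rewrite mulrS; exact: continuousD.
case: z => n cf; first exact: cMn.
by under eq_fun do rewrite NegzE mulrNz; apply/continuousN/cMn.
Qed.

End ContinuityIntoZmodule.

Lemma pair_continuous (X Y Z : topologicalType) (f : X -> Y) (g : X -> Z) :
  continuous f -> continuous g -> continuous (fun x => (f x, g x)).
Proof. by move=> cf cg x; apply: cvg_pair; [exact: cf | exact: cg]. Qed.

Lemma ptws_continuous (X K : topologicalType) (I : eqType) (g : X -> {ptws I -> K}) :
  (forall i, continuous (fun x => g x i)) -> continuous g.
Proof.
move=> cg x; apply/cvg_sup => i.
exact: (@continuous_comp_initial _ _ _ (fun f : {ptws I -> K} => f i) g (cg i) x).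
Qed.

Lemma fst_coord_continuous (Y K : topologicalType) (I : eqType) (i : I) :
  continuous (fun xy : {ptws I -> K} * Y => xy.1 i).
Proof.
move=> [x y]; apply: (@continuous_comp _ _ _ fst (fun x : {ptws I -> K} => x i)).
  exact: cvg_fst.
exact: (@proj_continuous I (fun _ => K) i).
Qed.

Lemma snd_coord_continuous (Y K : topologicalType) (I : eqType) (i : I) :
  continuous (fun xy : Y * {ptws I -> K} => xy.2 i).
Proof.
move=> [x y]; apply: (@continuous_comp _ _ _ snd (fun y : {ptws I -> K} => y i)).
  exact: cvg_snd.
exact: (@proj_continuous I (fun _ => K) i).
Qed.

Lemma continuous_subspace_comp (X Y Z : topologicalType) (S : set X) (B : set Y)
    (f : Y -> Z) (g : X -> Y) :
  {within B, continuous f} -> continuous g -> (forall x, S x -> B (g x)) ->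
  {within S, continuous (fun x => f (g x))}.
Proof.
move=> /subspace_continuousP cf cg gSB; apply/subspace_continuousP => x Sx.
apply: cvg_trans (cf (g x) (gSB x Sx)) => W /= /(cg x).
rewrite !nbhs_simpl /= => gW.
by apply: filterS gW => z Wgz Sz; exact: Wgz (gSB z Sz).
Qed.

Section DoubleComplex.
Variables (T : topologicalType) (mul : T -> T -> T) (inv : T -> T) (e : T).
Variables (A : topologicalZmodType) (act : T -> A -> A).
Hypothesis actD : forall g a b, act g (a + b) = act g a + act g b.

Local Notation TT := (TT T A).
Local Notation Tup := (Tup T).
Local Notation Gam U q := (@Gamma _ mul inv U q).
Local Notation A_lc := (A_lc mul inv e).
Local Notation invariant := (Defs.invariant mul inv act).
Local Notation Tot n F := (Tot mul inv e act n F).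
Local Notation T_cobound m D := (T_cobound mul inv e act m D).
Local Notation C_lc := (C_lc mul inv e act).

Lemma act0 g : act g 0 = 0.
Proof. by apply: (addrI (act g 0)); rewrite -actD !addr0. Qed.

Lemma actN g a : act g (- a) = - act g a.
Proof. by apply: (addrI (act g a)); rewrite -actD !subrr act0. Qed.

Lemma act_sum g I (r : seq I) (F : I -> A) :
  act g (\sum_(i <- r) F i) = \sum_(i <- r) act g (F i).
Proof. by elim: r => [|i r IH]; rewrite ?big_nil ?act0 // !big_cons actD IH. Qed.

Lemma act_mulrz g a z : act g (a *~ z) = act g a *~ z.
Proof.
have act_mulrn n : act g (a *+ n) = act g a *+ n.
  by elim: n => [|n IH]; rewrite ?mulr0n ?act0 // !mulrS actD IH.
by case: z => n; rewrite ?NegzE ?mulrNz ?actN act_mulrn.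
Qed.

Section Bidegree.
Variables p q : nat.
Implicit Types f g : ('I_p.+1 -> T) -> ('I_q.+1 -> T) -> A.

Lemma d_hD f g x y : d_h (fun x y => f x y + g x y) x y = d_h f x y + d_h g x y.
Proof. exact: (deltaD (fun x => f x y) (fun x => g x y)). Qed.

Lemma d_hN f x y : d_h (fun x y => - f x y) x y = - d_h f x y.
Proof. exact: (deltaN (fun x => f x y)). Qed.

Lemma d_h_eq0 f x y : (forall x y, f x y = 0) -> d_h f x y = 0.
Proof. by move=> f0; apply: (delta_eq0 (F := fun x => f x y)). Qed.

Lemma d_vD f g x y : d_v (fun x y => f x y + g x y) x y = d_v f x y + d_v g x y.
Proof. by rewrite /d_v -mulrzDl; congr (_ *~ _); exact: (deltaD (f x) (g x)). Qed.

Lemma d_vN f x y : d_v (fun x y => - f x y) x y = - d_v f x y.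
Proof. by rewrite /d_v -mulNrz; congr (_ *~ _); exact: (deltaN (f x)). Qed.

Lemma d_v_eq0 f x y : (forall x y, f x y = 0) -> d_v f x y = 0.
Proof.
by move=> f0; rewrite /d_v [X in X *~ _](delta_eq0 (F := f x)) ?mul0rz.
Qed.

Lemma eq_d_h f g x y : (forall x y, f x y = g x y) -> d_h f x y = d_h g x y.
Proof. by move=> fg; congr d_h; apply/funext => x'; apply/funext. Qed.

Lemma eq_d_v f g x y : (forall x y, f x y = g x y) -> d_v f x y = d_v g x y.
Proof. by move=> fg; congr d_v; apply/funext => x'; apply/funext. Qed.

Lemma d_h_d_h f x y : d_h (d_h f) x y = 0.
Proof. exact: (delta_delta (fun x => f x y)). Qed.

Lemma d_v_d_v f x y : d_v (d_v f) x y = 0.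
Proof.
rewrite /d_v [X in X *~ _](deltaMz (delta (f x))).
by rewrite [X in X *~ _ *~ _](delta_delta (f x)) !mul0rz.
Qed.

Lemma d_h_d_v f x y : d_h (d_v f) x y + d_v (d_h f) x y = 0.
Proof.
pose t (i : 'I_p.+2) (j : 'I_q.+2) := f (fun k => x (lift i k)) (fun k => y (lift j k)).
have -> : d_h (d_v f) x y = \sum_(i < p.+2) \sum_(j < q.+2) t i j *~ (sg j * sg p * sg i).
  rewrite /d_h /d_v /delta; apply: eq_bigr => i _.
  by rewrite !mulrz_suml; apply: eq_bigr => j _; rewrite !mulrzA.
have -> : d_v (d_h f) x y = \sum_(i < p.+2) \sum_(j < q.+2) t i j *~ (sg i * sg j * sg p.+1).
  rewrite /d_h /d_v /delta exchange_big /= mulrz_suml; apply: eq_bigr => j _.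
  by rewrite !mulrz_suml; apply: eq_bigr => i _; rewrite !mulrzA.
rewrite -big_split /=; apply: big1 => i _; rewrite -big_split /=.
apply: big1 => j _; rewrite -mulrzDr.
have -> : sg j * sg p * sg i + sg i * sg j * sg p.+1 = 0 by rewrite exprS; ring.
by rewrite mulr0z.
Qed.

End Bidegree.

Definition Dh (F : TT) : TT := fun p q x y =>
  match p as p0 return ('I_p0.+1 -> T) -> A with
  | 0 => fun _ => 0
  | p'.+1 => fun x' => d_h (F p' q) x' y
  end x.

Definition Dv (F : TT) : TT := fun p q x y =>
  match q as q0 return ('I_q0.+1 -> T) -> A with
  | 0 => fun _ => 0
  | q'.+1 => fun y' => d_v (F p q') x y'
  end y.

Definition Tadd (F G : TT) : TT := fun p q x y => F p q x y + G p q x y.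
Definition T0 : TT := fun p q x y => 0.

Lemma TT_ext (F G : TT) : (forall p q x y, F p q x y = G p q x y) -> F = G.
Proof.
move=> FG; do 2 apply: functional_extensionality_dep => ?.
by apply/funext => x; apply/funext.
Qed.

Section TotalDifferential.
Variables (p q : nat) (x : 'I_p.+1 -> T) (y : 'I_q.+1 -> T).
Implicit Types F G : TT.

Lemma dTE F : dT F x y = Dh F x y + Dv F x y.
Proof. by []. Qed.

Lemma DhD F G : Dh (Tadd F G) x y = Dh F x y + Dh G x y.
Proof. by case: p x => [|p'] x' /=; [rewrite addr0 | exact: d_hD]. Qed.

Lemma DvD F G : Dv (Tadd F G) x y = Dv F x y + Dv G x y.
Proof. by case: q y => [|q'] y' /=; [rewrite addr0 | exact: d_vD]. Qed.

Lemma DhB F G : Dh (Tsub F G) x y = Dh F x y - Dh G x y.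
Proof. by case: p x => [|p'] x' /=; [rewrite subr0 | rewrite d_hD d_hN]. Qed.

Lemma DvB F G : Dv (Tsub F G) x y = Dv F x y - Dv G x y.
Proof. by case: q y => [|q'] y' /=; [rewrite subr0 | rewrite d_vD d_vN]. Qed.

Lemma Dh_eq0 F : (forall p q x y, F p q x y = 0) -> Dh F x y = 0.
Proof. by case: p x => [|p'] x' //= F0; apply: d_h_eq0 => *; apply: F0. Qed.

Lemma Dv_eq0 F : (forall p q x y, F p q x y = 0) -> Dv F x y = 0.
Proof. by case: q y => [|q'] y' //= F0; apply: d_v_eq0 => *; apply: F0. Qed.

Lemma DhDh F : Dh (Dh F) x y = 0.
Proof. by case: p x => [|[|p']] x' //=; [apply: d_h_eq0 | exact: d_h_d_h]. Qed.

Lemma DvDv F : Dv (Dv F) x y = 0.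
Proof. by case: q y => [|[|q']] y' //=; [apply: d_v_eq0 | exact: d_v_d_v]. Qed.

Lemma DhDv F : Dh (Dv F) x y + Dv (Dh F) x y = 0.
Proof.
case: p x => [|p'] x'; case: q y => [|q'] y' /=; rewrite ?addr0 ?add0r //.
- exact: d_v_eq0.
- exact: d_h_eq0.
- exact: d_h_d_v.
Qed.

Lemma dT_dT F : dT (dT F) x y = 0.
Proof.
change (Dh (Tadd (Dh F) (Dv F)) x y + Dv (Tadd (Dh F) (Dv F)) x y = 0).
by rewrite DhD DvD DhDh DvDv add0r addr0 DhDv.
Qed.

Lemma dTD F G : dT (Tadd F G) x y = dT F x y + dT G x y.
Proof. by rewrite !dTE DhD DvD addrACA. Qed.

Lemma dTB F G : dT (Tsub F G) x y = dT F x y - dT G x y.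
Proof. by rewrite !dTE DhB DvB addrACA opprD. Qed.

Lemma dT_eq0 F : (forall p q x y, F p q x y = 0) -> dT F x y = 0.
Proof. by move=> F0; rewrite dTE Dh_eq0 // Dv_eq0 // addr0. Qed.

End TotalDifferential.

Lemma Gamma_sub (U V : set T) q : U `<=` V -> Gam U q `<=` Gam V q.
Proof. by case: q => [|q] //= UV y Uy i j; apply: UV; apply: Uy. Qed.

Lemma Gamma_lift (U : set T) q (i : 'I_q.+2) (y : Tup q.+1) :
  Gam U q.+1 y -> Gam U q ((fun k => y (lift i k)) : Tup q).
Proof. by case: q i y => [|q] i y //= Uy i' j'; apply: Uy. Qed.

Definition tcons p (a : T) (x : 'I_p.+1 -> T) : 'I_p.+2 -> T :=
  fun i => if nat_of_ord i is k.+1 then x (inord k) else a.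

(* The contracting homotopy of the rows:
   [row_contract f (x_0, ..., x_p; y) = f (y_0, x_0, ..., x_p; y)]. *)
Definition row_contract p q (f : ('I_p.+2 -> T) -> ('I_q.+1 -> T) -> A) :
    ('I_p.+1 -> T) -> ('I_q.+1 -> T) -> A :=
  fun x y => f (tcons (y ord0) x) y.

Section LocallyContinuous.
Variables p q : nat.
Implicit Types f g : ('I_p.+1 -> T) -> ('I_q.+1 -> T) -> A.

Lemma A_lc0 : A_lc (fun (_ : 'I_p.+1 -> T) (_ : 'I_q.+1 -> T) => 0 : A).
Proof.
by exists setT; split; [exact: filterT | apply/continuous_subspaceT/cst_continuous].
Qed.

Lemma A_lcD f g : A_lc f -> A_lc g -> A_lc (fun x y => f x y + g x y).
Proof.
move=> [U [hU cf]] [V [hV cg]]; exists (U `&` V); split; first exact: filterI.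
apply: continuousD.
- by apply: continuous_subspaceW cf => xy /=; apply: Gamma_sub => ? [].
- by apply: continuous_subspaceW cg => xy /=; apply: Gamma_sub => ? [].
Qed.

Lemma A_lcN f : A_lc f -> A_lc (fun x y => - f x y).
Proof. by move=> [U [hU cf]]; exists U; split => //; exact: continuousN. Qed.

Lemma A_lcB f g : A_lc f -> A_lc g -> A_lc (fun x y => f x y - g x y).
Proof. by move=> Af Ag; apply: A_lcD => //; exact: A_lcN. Qed.

End LocallyContinuous.

Lemma A_lc_d_h p q (f : ('I_p.+1 -> T) -> ('I_q.+1 -> T) -> A) : A_lc f -> A_lc (d_h f).
Proof.
move=> [U [hU cf]]; exists U; split => //; rewrite /d_h /delta.
apply: continuous_sum => i; apply: continuousMz.
apply: (continuous_subspace_comp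
  (g := fun xy : Tup p.+1 * Tup q => (xy.1 \o lift i : Tup p, xy.2)) cf) => //.
apply: pair_continuous; last by move=> ?; exact: cvg_snd.
by apply: ptws_continuous => j; exact: fst_coord_continuous.
Qed.

Lemma A_lc_d_v p q (f : ('I_p.+1 -> T) -> ('I_q.+1 -> T) -> A) : A_lc f -> A_lc (d_v f).
Proof.
move=> [U [hU cf]]; exists U; split => //; rewrite /d_v.
apply: continuousMz; apply: continuous_sum => i; apply: continuousMz.
apply: (continuous_subspace_comp
  (g := fun xy : Tup p * Tup q.+1 => (xy.1, xy.2 \o lift i : Tup q)) cf) => [|[x y]];
  last exact: Gamma_lift.
apply: pair_continuous; first by move=> ?; exact: cvg_fst.
by apply: ptws_continuous => j; exact: snd_coord_continuous.
Qed.

Lemma A_lc_row_contract p q (f : ('I_p.+2 -> T) -> ('I_q.+1 -> T) -> A) :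
  A_lc f -> A_lc (row_contract f).
Proof.
move=> [U [hU cf]]; exists U; split => //; rewrite /row_contract.
apply: (continuous_subspace_comp
  (g := fun xy : Tup p * Tup q => (tcons (xy.2 ord0) xy.1 : Tup p.+1, xy.2)) cf) => //.
apply: pair_continuous; last by move=> ?; exact: cvg_snd.
apply: ptws_continuous => -[[|k] hk] /=.
- exact: snd_coord_continuous.
- exact: fst_coord_continuous.
Qed.

Section Invariance.
Variables p q : nat.
Implicit Types f g : ('I_p.+1 -> T) -> ('I_q.+1 -> T) -> A.

Lemma invariant0 : invariant (fun (_ : 'I_p.+1 -> T) (_ : 'I_q.+1 -> T) => 0 : A).
Proof. by move=> g x y; rewrite act0. Qed.

Lemma invariantD f g : invariant f -> invariant g -> invariant (fun x y => f x y + g x y).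
Proof. by move=> If Ig h x y; rewrite actD If Ig. Qed.

Lemma invariantN f : invariant f -> invariant (fun x y => - f x y).
Proof. by move=> If h x y; rewrite actN If. Qed.

Lemma invariantB f g : invariant f -> invariant g -> invariant (fun x y => f x y - g x y).
Proof. by move=> If Ig; apply: invariantD => //; exact: invariantN. Qed.

Lemma invariant_d_h f : invariant f -> invariant (d_h f).
Proof.
move=> If g x y; rewrite /d_h /delta act_sum; apply: eq_bigr => i _.
by rewrite act_mulrz If.
Qed.

Lemma invariant_d_v f : invariant f -> invariant (d_v f).
Proof.
move=> If g x y; rewrite /d_v act_mulrz act_sum; congr (_ *~ _).
by apply: eq_bigr => i _; rewrite act_mulrz If.
Qed.

End Invariance.

Lemma invariant_row_contract p q (f : ('I_p.+2 -> T) -> ('I_q.+1 -> T) -> A) :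
  invariant f -> invariant (row_contract f).
Proof.
move=> If g x y; rewrite /row_contract -(If g (tcons (y ord0) x) y).
congr (act g (f _ _)).
by apply/funext => -[[|k] hk].
Qed.

Lemma Tot0 n : Tot n T0.
Proof. by move=> p q; split => // _; split; [exact: A_lc0 | exact: invariant0]. Qed.

Lemma TotD n (F G : TT) : Tot n F -> Tot n G -> Tot n (Tadd F G).
Proof.
move=> TF TG p q; split => [pq | pq x y].
- have [AF IF] := (TF p q).1 pq; have [AG IG] := (TG p q).1 pq.
  by split; [exact: A_lcD | exact: invariantD].
- by rewrite /Tadd (TF p q).2 // (TG p q).2 // addr0.
Qed.

Lemma TotB n (F G : TT) : Tot n F -> Tot n G -> Tot n (Tsub F G).
Proof.
move=> TF TG p q; split => [pq | pq x y].
- have [AF IF] := (TF p q).1 pq; have [AG IG] := (TG p q).1 pq.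
  by split; [exact: A_lcB | exact: invariantB].
- by rewrite /Tsub (TF p q).2 // (TG p q).2 // subr0.
Qed.

Lemma Tot_Dh n (F : TT) p q : Tot n F -> p + q = n.+1 ->
  A_lc (fun x y => @Dh F p q x y) /\ invariant (fun x y => @Dh F p q x y).
Proof.
case: p => [|p] TF pq /=; first by split; [exact: A_lc0 | exact: invariant0].
have [AF IF] := (TF p q).1 ltac:(lia).
by split; [exact: A_lc_d_h | exact: invariant_d_h].
Qed.

Lemma Tot_Dv n (F : TT) p q : Tot n F -> p + q = n.+1 ->
  A_lc (fun x y => @Dv F p q x y) /\ invariant (fun x y => @Dv F p q x y).
Proof.
case: q => [|q] TF pq /=; first by split; [exact: A_lc0 | exact: invariant0].
have [AF IF] := (TF p q).1 ltac:(lia).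
by split; [exact: A_lc_d_v | exact: invariant_d_v].
Qed.

Lemma Tot_dT n (F : TT) : Tot n F -> Tot n.+1 (dT F).
Proof.
move=> TF p q; split => [pq | pq x y].
- have [ADh IDh] := Tot_Dh TF pq; have [ADv IDv] := Tot_Dv TF pq.
  by split; [exact: A_lcD | exact: invariantD].
- rewrite dTE; case: p x pq => [|p] x pq; case: q y pq => [|q] y pq /=;
    rewrite ?addr0 ?add0r //.
  all: by rewrite ?d_h_eq0 ?d_v_eq0 ?addr0 // => *; apply: (TF _ _).2; lia.
Qed.

Lemma tcons_lift0 p a (x : 'I_p.+1 -> T) : (fun j => tcons a x (lift ord0 j)) = x.
Proof. by apply/funext => j; rewrite /tcons lift0 inord_val. Qed.

Lemma tcons_lift p a (x : 'I_p.+2 -> T) (i : 'I_p.+2) :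
  (fun j => tcons a x (lift (lift ord0 i) j)) = tcons a (fun j => x (lift i j)).
Proof.
apply/funext => -[[|k] hk]; rewrite /tcons //=.
have -> : bump (bump 0 i) k.+1 = (bump i k).+1 by rewrite /bump; lia.
by congr x; apply: ord_inj; rewrite /= !inordK //; move: hk; rewrite /bump; lia.
Qed.

Lemma tcons_lift1 a (x : 'I_1 -> T) :
  (fun j : 'I_1 => tcons a x (lift (lift ord0 ord0) j)) = (fun _ => a).
Proof. by apply/funext => -[[|k] hk]. Qed.

Lemma row_contract_homotopy p q (f : ('I_p.+2 -> T) -> ('I_q.+1 -> T) -> A) x y :
  f x y = d_h (row_contract f) x y + row_contract (d_h f) x y.
Proof.
rewrite /row_contract /d_h /delta [X in _ = _ + X]big_ord_recl /= tcons_lift0 expr0 mulr1z.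
have bump0 i : bump 0 i = i.+1 by rewrite /bump.
under [X in _ = _ + (_ + X)]eq_bigr => i _ do
  rewrite tcons_lift bump0 exprS mulN1r mulrNz.
by rewrite sumrN addrCA subrr addr0.
Qed.

Lemma d_h_eq0_col0 q (f : ('I_1 -> T) -> ('I_q.+1 -> T) -> A) :
  (forall x y, d_h f x y = 0) -> forall x y, f x y = f (fun _ => y ord0) y.
Proof.
(* Evaluate the cocycle condition at [(y_0, x_0)]. *)
move=> df x y; have /eqP := df (tcons (y ord0) x) y.
rewrite /d_h /delta !big_ord_recl big_ord0 /= tcons_lift0 tcons_lift1.
by rewrite (_ : bump 0 0 = 1%N) // expr0 expr1 mulr1z mulrN1z addr0 subr_eq0 => /eqP.
Qed.

Definition cohomologous m (F G : TT) := T_cobound m (Tsub F G).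

Lemma T_cobound_closed m (D : TT) p q (x : 'I_p.+1 -> T) (y : 'I_q.+1 -> T) :
  T_cobound m D -> dT D x y = 0.
Proof.
case: m => [|m] /=; first by move=> D0; apply: dT_eq0.
by move=> [W [_ <-]]; exact: dT_dT.
Qed.

Lemma cohomologous_refl m (F : TT) : cohomologous m F F.
Proof.
case: m => [|m] /=; first by move=> p q x y; rewrite /Tsub subrr.
exists T0; split; first exact: Tot0.
by apply: TT_ext => p q x y; rewrite /Tsub subrr dT_eq0.
Qed.

Lemma cohomologous_sym m (F G : TT) : cohomologous m F G -> cohomologous m G F.
Proof.
case: m => [|m] /=.
  by move=> FG p q x y; move/subr0_eq: (FG p q x y); rewrite /Tsub => ->; rewrite subrr.
move=> [W [TW dW]]; exists (Tsub T0 W); split; first by apply: TotB => //; exact: Tot0.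
by apply: TT_ext => p q x y; rewrite dTB dW /Tsub dT_eq0 // sub0r opprB.
Qed.

Lemma cohomologous_trans m (F G H : TT) :
  cohomologous m F G -> cohomologous m G H -> cohomologous m F H.
Proof.
case: m => [|m] /=.
  move=> FG GH p q x y; move/subr0_eq: (FG p q x y); move/subr0_eq: (GH p q x y).
  by rewrite /Tsub => -> ->; rewrite subrr.
move=> [W1 [TW1 dW1]] [W2 [TW2 dW2]]; exists (Tadd W1 W2); split; first exact: TotD.
by apply: TT_ext => p q x y; rewrite dTD dW1 dW2 /Tsub addrA subrK.
Qed.

(* One step of the staircase: the part of [W] in its last column [k.+1] is a
   horizontal cocycle, hence [d_h] of its row contraction, which we subtract. *)
Lemma column_shift m k (W : TT) : Tot m.+1 W ->
  (forall p q (x : 'I_p.+1 -> T) (y : 'I_q.+1 -> T), (k.+1 < p)%N -> W p q x y = 0) ->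
  (forall p q (x : 'I_p.+1 -> T) (y : 'I_q.+1 -> T), (0 < p)%N -> dT W x y = 0) ->
  exists2 V : TT, Tot m V & forall p q (x : 'I_p.+1 -> T) (y : 'I_q.+1 -> T),
    (k < p)%N -> Tsub W (dT V) x y = 0.
Proof.
move=> TW Wk dW.
have d_hW q (x : 'I_k.+3 -> T) (y : 'I_q.+1 -> T) : d_h (W k.+1 q) x y = 0.
  rewrite -(dW k.+2 q x y isT) dTE /= -[LHS]addr0; congr (_ + _).
  by case: q x y => [|q] x y //=; rewrite d_v_eq0 // => *; apply: Wk.
pose V : TT := fun p q x y => if p == k then row_contract (W p.+1 q) x y else 0.
have V_off p q (x : 'I_p.+1 -> T) y : p != k -> V p q x y = 0 by rewrite /V => /negbTE ->.
exists V => [p q | p q x y kp].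
  rewrite /V; case: eqVneq => [-> | _]; last first.
    by split=> [_ | //]; split; [exact: A_lc0 | exact: invariant0].
  split => [kq | kq x y]; last by apply: (TW _ _).2; lia.
  have [AW IW] := (TW k.+1 q).1 ltac:(lia).
  by split; [exact: A_lc_row_contract | exact: invariant_row_contract].
rewrite /Tsub dTE.
have -> : Dv V x y = 0.
  by case: q y => [|q] y //=; apply: d_v_eq0 => *; apply: V_off; rewrite neq_ltn kp orbT.
rewrite addr0; case: p x kp => [|p] x kp //=.
case: (eqVneq p k) => [epk | pk].
  subst p; rewrite (@eq_d_h _ _ _ (row_contract (W k.+1 q))) => [|x' y'].
    rewrite {1}(row_contract_homotopy (W k.+1 q) x y).
    have -> : row_contract (d_h (W k.+1 q)) x y = 0 by exact: d_hW.
    by rewrite addr0 subrr.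
  by rewrite /V eqxx.
by rewrite Wk 1?d_h_eq0 ?subrr // => [x' y' | ]; [exact: V_off | lia].
Qed.

Lemma cohomologous_col0 m k (W : TT) : Tot m W ->
  (forall p q (x : 'I_p.+1 -> T) (y : 'I_q.+1 -> T), (k < p)%N -> W p q x y = 0) ->
  (forall p q (x : 'I_p.+1 -> T) (y : 'I_q.+1 -> T), (0 < p)%N -> dT W x y = 0) ->
  exists W' : TT, [/\ Tot m W', cohomologous m W W' &
    forall p q (x : 'I_p.+1 -> T) (y : 'I_q.+1 -> T), (0 < p)%N -> W' p q x y = 0].
Proof.
move=> + Wk dW; case: m => [|m] TW.
  exists W; split; [done | exact: cohomologous_refl |].
  by move=> p q x y p0; apply: (TW p q).2; lia.
elim: k W TW Wk dW => [|k IH] W TW Wk dW.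
  by exists W; split; [| exact: cohomologous_refl | move=> *; apply: Wk].
have [V TV WV] := column_shift TW Wk dW.
have TW1 : Tot m.+1 (Tsub W (dT V)) by apply: TotB => //; exact: Tot_dT.
have dW1 p q (x : 'I_p.+1 -> T) (y : 'I_q.+1 -> T) :
    (0 < p)%N -> dT (Tsub W (dT V)) x y = 0.
  by move=> p0; rewrite dTB dT_dT subr0 dW.
have [W' [TW' cW' W'0]] := IH _ TW1 WV dW1.
exists W'; split => //; apply: cohomologous_trans cW'; exists V; split => //.
by apply: TT_ext => p q x y; rewrite /Tsub opprB addrC subrK.
Qed.

Lemma j_hE n (c : CC T A n) (x : 'I_1 -> T) (y : 'I_n.+1 -> T) : j_h c x y = c y.
Proof. by rewrite /j_h !eqxx; congr c; apply/funext => i; rewrite inord_val. Qed.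

Lemma j_h_off n (c : CC T A n) p q (x : 'I_p.+1 -> T) (y : 'I_q.+1 -> T) :
  (p != 0%N) || (q != n) -> j_h c x y = 0.
Proof. by move=> pqn; rewrite /j_h ifF //; apply/negbTE; rewrite negb_and. Qed.

Lemma j_h_inj n : injective (@j_h T A n).
Proof.
move=> c c' cc'; apply/funext => y.
by rewrite -(j_hE c (fun _ => y ord0)) cc' j_hE.
Qed.

Lemma d_h_col0_const q (f : ('I_1 -> T) -> ('I_q.+1 -> T) -> A) x y :
  (forall x1 x2, f x1 y = f x2 y) -> d_h f x y = 0.
Proof.
move=> fy; rewrite /d_h /delta !big_ord_recl big_ord0 /= (fy _ (fun j => x (lift ord0 j))).
by rewrite (_ : bump 0 0 = 1%N) // expr0 expr1 mulr1z mulrN1z addr0 subrr.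
Qed.

Lemma Tot_j_h n (c : CC T A n) : C_lc c -> Tot n (j_h c).
Proof.
move=> [Ic [U [hU cc]]] p q; split => [pq | pq x y]; last first.
  by apply: j_h_off; case: (eqVneq p 0%N) => [p0 | //]; apply/eqP; lia.
have [p0 | p0] := eqVneq p 0%N; last first.
  have -> : @j_h T A n c p q = fun _ _ => 0.
    by do 2 apply/funext => ?; rewrite j_h_off ?p0.
  by split; [exact: A_lc0 | exact: invariant0].
subst p; have qn : q = n by lia.
subst q; have -> : @j_h T A n c 0 n = fun _ y => c y.
  by do 2 apply/funext => ?; rewrite j_hE.
split; last by move=> g x y; exact: Ic.
exists U; split => //.
by apply: (continuous_subspace_comp (g := snd) cc) => // ?; exact: cvg_snd.
Qed.

Lemma dT_j_h n (c : CC T A n) : dT (j_h c) = j_h (dC c).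
Proof.
apply: TT_ext => p q x y; rewrite dTE.
have Dh_j_h : Dh (j_h c) x y = 0.
  case: p x => [|[|p]] x //=; last by apply: d_h_eq0 => *; rewrite j_h_off.
  by apply: d_h_col0_const => x1 x2; rewrite /j_h.
rewrite Dh_j_h add0r; case: p x {Dh_j_h} => [|p] x; last first.
  by rewrite j_h_off //; case: q y => [|q] y //=; rewrite d_v_eq0 // => *; rewrite j_h_off.
case: q y => [|q] y /=; first by rewrite j_h_off.
have [qn | qn] := eqVneq q n; last first.
  by rewrite j_h_off ?eqSS ?qn // d_v_eq0 // => *; rewrite j_h_off ?qn ?orbT.
subst q; rewrite j_hE (@eq_d_v _ _ _ (fun _ y => c y)) => [|*]; last by rewrite j_hE.
by rewrite /d_v expr0 mulr1z.
Qed.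

Lemma C_lc_col0 n (f : ('I_1 -> T) -> ('I_n.+1 -> T) -> A) :
  A_lc f -> invariant f -> C_lc (fun y : Tup n => f (fun _ => y ord0) y).
Proof.
move=> [U [hU cf]] If; split; first by move=> g y; exact: (If g (fun _ => y ord0) y).
exists U; split => //.
apply: (continuous_subspace_comp
  (g := fun y : Tup n => ((fun _ => y ord0) : Tup 0, y)) cf) => //.
apply: pair_continuous => [|?]; last exact: cvg_id.
by apply: ptws_continuous => _; exact: (@proj_continuous _ (fun _ => T) ord0).
Qed.

Lemma cohomologous_j_h n (z : TT) : Tot n z ->
  (forall p q (x : 'I_p.+1 -> T) (y : 'I_q.+1 -> T), (0 < p)%N -> dT z x y = 0) ->
  exists c : CC T A n, [/\ C_lc c, cohomologous n z (j_h c) & dT (j_h c) = dT z].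
Proof.
move=> Tz dz.
have [z' [Tz' cz' z'0]] := @cohomologous_col0 n n z Tz
  (fun p q x y np => (Tz p q).2 ltac:(lia) x y) dz.
have dz' : dT z' = dT z.
  apply: TT_ext => p q x y; apply/eqP; rewrite eq_sym -subr_eq0 -dTB.
  by rewrite (T_cobound_closed _ _ cz').
have Dv_z' p q (x : 'I_p.+2 -> T) (y : 'I_q.+1 -> T) : Dv z' x y = 0.
  by case: q y => [|q] y //=; apply: d_v_eq0 => *; apply: z'0.
have z'_const : forall x y, z' 0%N n x y = z' 0%N n (fun _ => y ord0) y.
  by apply: d_h_eq0_col0 => x y; rewrite -(dz 1%N n x y isT) -dz' dTE Dv_z' addr0.
exists (fun y => z' 0%N n (fun _ => y ord0) y).
have [Az' Iz'] := (Tz' 0%N n).1 erefl.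
have -> : j_h (fun y => z' 0%N n (fun _ => y ord0) y) = z'.
  apply: TT_ext => p q x y; have [p0 | p0] := eqVneq p 0%N; last first.
    by rewrite j_h_off ?p0 // z'0 // lt0n.
  subst p; have [qn | qn] := eqVneq q n; first by subst q; rewrite j_hE [RHS]z'_const.
  by rewrite j_h_off ?qn ?orbT // (Tz' 0%N q).2 //; lia.
by split => //; exact: C_lc_col0.
Qed.

End DoubleComplex.

Theorem mainTheorem1 (T : topologicalType) (mul : T -> T -> T) (inv : T -> T) (e : T)
  (A : topologicalZmodType) (act : T -> A -> A) :
  is_topological_group mul inv e ->
  is_topological_G_module mul e act ->
  jh_quasi_iso mul inv e act.
Proof.
move=> _ [actD _ _ _]; split; [|split; [|split]].
- by move=> n c Cc; exact: Tot_j_h.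
- by move=> n c _; exact: dT_j_h.
- case=> [|m] c Cc _ /=; first by move=> jc0 x; rewrite -(j_hE c x) jc0.
  move=> [W [TW dW]].
  have dW0 p q (x : 'I_p.+1 -> T) (y : 'I_q.+1 -> T) : (0 < p)%N -> dT W x y = 0.
    by move=> p0; rewrite dW j_h_off // -lt0n p0.
  have [b [Cb _ db]] := cohomologous_j_h actD TW dW0.
  by exists b; split => //; apply: j_h_inj; rewrite -dT_j_h db dW.
- move=> n z Tz dz.
  have dz0 p q (x : 'I_p.+1 -> T) (y : 'I_q.+1 -> T) : (0 < p)%N -> dT z x y = 0.
    by rewrite dz.
  have [c [Cc zc dc]] := cohomologous_j_h actD Tz dz0.
  exists c; split => //; last exact: cohomologous_sym.
  by apply/funext => y; rewrite -(j_hE _ (fun _ => y ord0)) -dT_j_h dc dz.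
Qed.
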